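(* Let $I$ be a finite set. The indicator functions $\mathbb 1_{\operatorname{cone}(\ell)}$, for $\ell$ ranging over the total preorders on $I$, form a basis of the vector space spanned by the indicator functions $\mathbb 1_{\operatorname{cone}(q)}$ of all preposet cones on $I$. Moreover, for every poset $p$ on $I$, $$\mathbb 1_{\operatorname{cone}(p)}=\sum_{\ell\text{ prelinear extension of }p}(-1)^{|I|-|\ell|}\,\mathbb 1_{\operatorname{cone}(\ell)}.$$
   Context: A preposet $q$ on $I$ is a reflexive transitive relation $\le_q$; $x\sim y$ iff $x\le_q y$ and $y\le_q x$; $x<_q y$ iff $x\le_q y$ and $y\not\le_q x$; $|q|$ is the number of $\sim$-classes. A poset is an antisymmetric preposet (so $|p|=|I|$). A total preorder is a preposet in which any two elements are comparable. $\operatorname{cone}(q)=\operatorname{cone}\{e_i-e_j: i\ge_q j\}\subseteq\mathbb R^I$. A prelinear extension of $q$ is a total preorder $\ell$ on $I$ with $x\le_q y\Rightarrow x\le_\ell y$ and $x<_q y\Rightarrow x<_\ell y$. *)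

From mathcomp Require Import all_boot all_order all_algebra.
From mathcomp Require Import boolp reals.
Set Implicit Arguments. Unset Strict Implicit. Unset Printing Implicit Defensive.
Import Order.TTheory GRing.Theory Num.Theory.
Local Open Scope ring_scope.

(* A relation on I is a finite set of pairs; (x, y) \in q means x <=_q y. *)
Section Preposets.
Variable I : finType.

Definition rle (q : {set I * I}) (x y : I) : bool := (x, y) \in q.

Definition preposet (q : {set I * I}) : bool :=
  [forall x, rle q x x] &&
  [forall x, forall y, forall z, rle q x y ==> rle q y z ==> rle q x z].

Definition poset (q : {set I * I}) : bool :=
  preposet q && [forall x, forall y, rle q x y ==> rle q y x ==> (x == y)].

Definition total_preorder (q : {set I * I}) : bool :=
  preposet q && [forall x, forall y, rle q x y || rle q y x].

Definition requiv (q : {set I * I}) (x y : I) : bool := rle q x y && rle q y x.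
Definition rlt (q : {set I * I}) (x y : I) : bool := rle q x y && ~~ rle q y x.

(* |q| : number of ~-classes *)
Definition nclasses (q : {set I * I}) : nat :=
  #|[set [set y | requiv q x y] | x : I]|.

Definition prelinear_ext (q l : {set I * I}) : bool :=
  total_preorder l &&
  [forall x, forall y, (rle q x y ==> rle l x y) && (rlt q x y ==> rlt l x y)].

Variable R : realType.

(* cone(q) = cone{ e_i - e_j : i >=_q j } in R^I : nonnegative combinations *)
Definition cone (q : {set I * I}) (v : I -> R) : Prop :=
  exists c : I * I -> R,
    (forall ij, 0 <= c ij) /\
    forall k : I,
      v k = \sum_(ij : I * I | rle q ij.2 ij.1)
              c ij * ((ij.1 == k)%:R - (ij.2 == k)%:R).

Definition ind_cone (q : {set I * I}) (v : I -> R) : R :=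
  if `[< cone q v >] then 1 else 0.

End Preposets.
Arguments ind_cone {I} R q v.
Arguments cone {I} R q v.

From mathcomp Require Import all_boot all_order all_algebra.
From mathcomp Require Import boolp reals.
From mathcomp Require Import ring lra.
Set Implicit Arguments. Unset Strict Implicit. Unset Printing Implicit Defensive.
Import Order.TTheory GRing.Theory Num.Theory.
Local Open Scope ring_scope.

(* Write sgn q = (-1)^|q| and, for a preposet q, [q + (a<=b)] for the least
   preposet containing q in which a <= b.
   1. Expansion.  If x, y are q-incomparable then cone(q) is the intersection
      and cone(q + (x<=y) + (y<=x)) the union of cone(q + (x<=y)) and
      cone(q + (y<=x)), whence an inclusion-exclusion identity for the
      indicators.  Prelinear extensions of q split according to x < y, y < x
      or x ~ y, and merging x and y loses exactly one class; induction on the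
      number of unrelated pairs gives
        1_cone(q) = sum_{l prelinear ext. of q} sgn q * sgn l * 1_cone(l).
      This gives the spanning part and the poset formula.
   2. Independence, proved for the total preorders containing any fixed
      equivalence relation E, by induction on E.  Evaluating a vanishing
      combination at v + N (e_z - e_w) with N -> +oo kills the cones in which
      w <= z fails and turns cone(l) into cone(l + (z<=w)) otherwise; by
      induction the sums of coefficients over each fiber of l |-> l + (z<=w)
      vanish.  The same holds for the signs s l = sgn E * sgn l, by part 1 for
      E.  A combinatorial argument then shows that a l * s l is constant, and
      evaluating at v = 0 shows that this constant is zero. *)

Lemma measure_ind (T : Type) (f : T -> nat) (P : T -> Prop) :
  (forall x, (forall y, (f y < f x)%N -> P y) -> P x) -> forall x, P x.
Proof.
move=> IH x; have [n lt_xn] := ubnP (f x); elim: n x lt_xn => // n IHn x lt_xn.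
by apply: IH => y lt_yx; apply: IHn; apply: leq_trans lt_yx _; rewrite -ltnS.
Qed.

(* Saturate the context under the transitivity law tr of a relation
   (used to close the small order-theoretic case analyses below). *)
Ltac sat tr :=
  repeat match goal with
  | H1 : is_true (rle ?q ?a ?b), H2 : is_true (rle ?q ?b ?c) |- _ =>
    lazymatch goal with
    | _ : is_true (rle q a c) |- _ => fail
    | _ => have := tr a b c H1 H2; intro
    end
  end.

Ltac contra_rle :=
  match goal with
  | H : is_true (~~ ?b), H' : is_true ?b |- _ => exfalso; exact: (negP H H')
  | H : ?b = false, H' : is_true ?b |- _ => exfalso; by rewrite H' in H
  end.

Ltac closeb :=
  repeat match goal with
  | H : is_true (rle ?q ?a ?b) |- context [rle ?q ?a ?b] => rewrite H
  | H : is_true (~~ rle ?q ?a ?b) |- context [rle ?q ?a ?b] => rewrite (negbTE H)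
  end; rewrite /= ?orbT ?andbT ?orbF ?andbF /=; try done.

Section Relations.
Variable I : finType.
Implicit Types (q l : {set I * I}).

Lemma preposetP q : preposet q ->
  (forall x, rle q x x) /\ (forall x y z, rle q x y -> rle q y z -> rle q x z).
Proof.
case/andP=> /forallP H1 /forallP H2; split=> // x y z Hxy Hyz.
by move: (H2 x) => /forallP /(_ y) /forallP /(_ z) /implyP /(_ Hxy) /implyP /(_ Hyz).
Qed.

Lemma preposetI q : (forall x, rle q x x) ->
  (forall x y z, rle q x y -> rle q y z -> rle q x z) -> preposet q.
Proof.
move=> H1 H2; apply/andP; split; first by apply/forallP.
apply/forallP=> x; apply/forallP=> y; apply/forallP=> z.
by apply/implyP=> Hxy; apply/implyP=> Hyz; apply: H2 Hyz.
Qed.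

Lemma totalP q : total_preorder q ->
  [/\ (forall x, rle q x x), (forall x y z, rle q x y -> rle q y z -> rle q x z)
    & (forall x y, rle q x y || rle q y x)].
Proof.
case/andP=> /preposetP [H1 H2] /forallP H3; split=> // x y.
by move: (H3 x) => /forallP.
Qed.

Lemma totalI q : preposet q -> (forall x y, rle q x y || rle q y x) ->
  total_preorder q.
Proof.
move=> Hp Ht; apply/andP; split=> //.
by apply/forallP=> x; apply/forallP=> y.
Qed.

Lemma extP q l : prelinear_ext q l <->
  [/\ total_preorder l, (forall a b, rle q a b -> rle l a b)
    & (forall a b, rlt q a b -> rlt l a b)].
Proof.
split.
  case/andP=> Ht /forallP H; split=> // a b; move: (H a) => /forallP /(_ b) /andP [].
    by move=> /implyP.
  by move=> _ /implyP.
case=> Ht H1 H2; apply/andP; split=> //.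
apply/forallP=> a; apply/forallP=> b; apply/andP; split; apply/implyP.
  exact: H1.
exact: H2.
Qed.

Lemma ext_total q l : total_preorder q -> prelinear_ext q l = (l == q).
Proof.
move=> Ht; have [rq tq tot] := totalP Ht.
apply/idP/eqP => [|->].
  case/extP => Hl Hs Hst; apply/setP => [[a b]].
  change (rle l a b = rle q a b); apply/idP/idP; last exact: Hs.
  move=> Hab; apply/negPn/negP => Hn.
  have Hba : rle q b a by move: (tot a b); rewrite (negbTE Hn).
  by have := Hst b a; rewrite /rlt Hba Hn => /(_ isT) /andP [_ /negP].
by apply/extP; split.
Qed.

(* addle q a b: q with the relation a <= b adjoined; for a preposet q this is
   the least preposet containing q in which a <= b. *)
Definition addle q (a b : I) : {set I * I} :=
  [set xy | rle q xy.1 xy.2 || (rle q xy.1 a && rle q b xy.2)].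

Lemma rle_addle q a b x y :
  rle (addle q a b) x y = rle q x y || (rle q x a && rle q b y).
Proof. by rewrite /rle inE. Qed.

Lemma preposet_addle q a b : preposet q -> preposet (addle q a b).
Proof.
case/preposetP=> H1 H2; apply: preposetI => [x|x y z]; rewrite !rle_addle.
  by rewrite H1.
case/orP=> [Hxy|/andP[Hxa Hby]]; case/orP=> [Hyz|/andP[Hya Hbz]].
- by rewrite (H2 _ _ _ Hxy Hyz).
- by rewrite (H2 _ _ _ Hxy Hya) Hbz orbT.
- by rewrite Hxa (H2 _ _ _ Hby Hyz) orbT.
- by rewrite Hxa Hbz orbT.
Qed.

Lemma addle_sub q a b x y : rle q x y -> rle (addle q a b) x y.
Proof. by rewrite rle_addle => ->. Qed.

Lemma addle_ab q a b : preposet q -> rle (addle q a b) a b.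
Proof. by case/preposetP=> H1 _; rewrite rle_addle !H1 orbT. Qed.

(* Adjoining a missing pair strictly shrinks the complement of a relation;
   this is the measure of the inductions on preposets. *)
Lemma card_compl_lt q a b : ~~ rle q a b ->
  forall q', (forall c d, rle q c d -> rle q' c d) -> rle q' a b ->
  (#|~: q'| < #|~: q|)%N.
Proof.
move=> Hab q' Hsub Hab'; apply: proper_card; apply/properP; split.
  apply/subsetP => [[c d]]; rewrite !inE; apply: contra; exact: Hsub.
by exists (a, b); rewrite inE ?negbK //.
Qed.

Definition merge q (x y : I) := addle (addle q x y) y x.

Definition cls q (a : I) : {set I} := [set b | requiv q a b].

Lemma nclassesE q : nclasses q = #|[set cls q a | a : I]|.
Proof. by []. Qed.

Lemma in_cls q a b : (b \in cls q a) = requiv q a b.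
Proof. by rewrite inE. Qed.

Lemma cls_eq q a b : preposet q -> (cls q a == cls q b) = requiv q a b.
Proof.
case/preposetP=> refl tr; apply/eqP/idP.
  move=> E; have : b \in cls q b by rewrite inE /requiv refl.
  by rewrite -E inE.
rewrite /requiv => /andP [Hab Hba]; apply/setP => c; rewrite !inE /requiv.
by apply/andP/andP => [[H1 H2]|[H1 H2]]; split; sat tr.
Qed.

End Relations.

Section Splitting.
Variable I : finType.
Variable q : {set I * I}.
Hypothesis Hq : preposet q.
Variables x y : I.
Hypothesis Hxy : ~~ rle q x y.
Hypothesis Hyx : ~~ rle q y x.
Let refl := proj1 (preposetP Hq).
Let tr := proj2 (preposetP Hq).

Lemma rle_merge a b : rle (merge q x y) a b =
  rle q a b || ((rle q a x || rle q a y) && (rle q x b || rle q y b)).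
Proof.
rewrite /merge !rle_addle !refl !andbT.
case: (rle q a b) => //=.
by case: (rle q a x); case: (rle q y b); case: (rle q a y); case: (rle q x b).
Qed.

Lemma addle_merge a b : rle (addle q x y) a b -> rle (merge q x y) a b.
Proof. by rewrite /merge => H; rewrite rle_addle H. Qed.

Lemma addle_merge_sym a b : rle (addle q y x) a b -> rle (merge q x y) a b.
Proof.
rewrite rle_addle rle_merge; case/orP=> [->//|/andP [Hay Hxb]].
by rewrite Hay Hxb !orbT.
Qed.

Lemma ext_addle (l : {set I * I}) :
  prelinear_ext (addle q x y) l = prelinear_ext q l && rlt l x y.
Proof.
apply/idP/idP.
  case/extP => Ht Hs Hst.
  apply/andP; split; last first.
    apply: Hst; rewrite /rlt addle_ab //= rle_addle negb_or (negbTE Hyx) /=.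
    by [].
  apply/extP; split=> // a b.
    by move/(addle_sub x y); apply: Hs.
  rewrite /rlt => /andP [Hab Hba]; apply: Hst; rewrite /rlt rle_addle Hab /=.
  rewrite rle_addle (negbTE Hba) /=; apply/negP => /andP [Hbx Hya].
  by sat tr; contra_rle.
case/andP => /extP [Ht Hs Hst] Hlxy.
have [rl trl _] := totalP Ht.
apply/extP; split=> // a b.
  rewrite rle_addle; case/orP; first exact: Hs.
  case/andP=> /Hs Hax /Hs Hyb; move: Hlxy; rewrite /rlt => /andP [Hxy' _].
  by sat trl.
rewrite /rlt !rle_addle negb_or => /andP [Hab /andP [Hba Hn]].
case/orP: Hab => [Hab|/andP [Hax Hyb]].
  by apply: Hst; rewrite /rlt Hab.
move: Hlxy; rewrite /rlt => /andP [Hlxy Hlyx].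
move/Hs: Hax => Hax'; move/Hs: Hyb => Hyb'.
sat trl; apply/andP; split=> //; apply/negP => Hba'.
by sat trl; contra_rle.
Qed.

Lemma ext_merge (l : {set I * I}) :
  prelinear_ext (merge q x y) l = prelinear_ext q l && requiv l x y.
Proof.
apply/idP/idP.
  case/extP => Ht Hs Hst.
  apply/andP; split; last first.
    by rewrite /requiv !Hs // rle_merge // !refl ?orbT.
  apply/extP; split=> // a b.
    by move=> H; apply: Hs; rewrite rle_merge // H.
  rewrite /rlt => /andP [Hab Hba]; apply: Hst; rewrite /rlt rle_merge // Hab /=.
  rewrite rle_merge // (negbTE Hba) /=; apply/negP.
  by case/andP => /orP [] ? /orP [] ?; sat tr; contra_rle.
case/andP => /extP [Ht Hs Hst] /andP [Hlxy Hlyx].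
have [rl trl _] := totalP Ht.
have Hsub : forall a b, rle (merge q x y) a b -> rle l a b.
  move=> a b; rewrite rle_merge //; case/orP; first exact: Hs.
  by case/andP => /orP [] /Hs ? /orP [] /Hs ?; sat trl.
apply/extP; split=> // a b.
rewrite /rlt => /andP [Hab Hba]; rewrite Hsub //=.
move: Hab Hba; rewrite !rle_merge // => /orP [Hab|Hn].
  rewrite negb_or => /andP [Hba _].
  by have := Hst a b; rewrite /rlt Hab Hba => /(_ isT) /andP [].
rewrite negb_or => /andP [Hba Hnn]; apply/negP => Hl.
(* a strict q-inequality a <_q u (or v <_q b) would survive in l *)
have key : forall u v, rle q a u -> rle q v b -> rle l u v ->
    rle q u a && rle q b v.
  move=> u v Hau Hvb Hluv.
  have Hlau := Hs _ _ Hau; have Hlvb := Hs _ _ Hvb.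
  apply/andP; split.
    apply/negPn/negP => Hn'; have := Hst a u; rewrite /rlt Hau Hn' => /(_ isT) /andP [_ H].
    by sat trl; contra_rle.
  apply/negPn/negP => Hn'; have := Hst v b; rewrite /rlt Hvb Hn' => /(_ isT) /andP [_ H].
  by sat trl; contra_rle.
move: Hnn; case/andP: Hn => /orP [] Hau /orP [] Hvb;
  (case/andP: (key _ _ Hau Hvb ltac:(by rewrite ?rl)) => H1 H2);
  by rewrite ?H1 ?H2 ?orbT.
Qed.

Lemma requiv_addle a b : requiv (addle q x y) a b = requiv q a b.
Proof.
rewrite /requiv !rle_addle.
case: (boolP (rle q a b)) => Hab; case: (boolP (rle q b a)) => Hba //=; rewrite ?andbT.
- by apply/negP => /andP [Hbx Hya]; sat tr; contra_rle.
- by apply/negP => /andP [Hax Hyb]; sat tr; contra_rle.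
- by apply/negP => /and3P [/andP [Hax Hyb] Hbx Hya]; sat tr; contra_rle.
Qed.

Lemma nclasses_addle : nclasses (addle q x y) = nclasses q.
Proof.
have E : forall a, cls (addle q x y) a = cls q a.
  by move=> a; apply/setP => b; rewrite !inE requiv_addle.
by rewrite !nclassesE (eq_imset _ E).
Qed.

Lemma requiv_merge a b : requiv (merge q x y) a b =
  requiv q a b || ((requiv q x a || requiv q y a) && (requiv q x b || requiv q y b)).
Proof.
rewrite /requiv !rle_merge //.
case: (boolP (rle q a b)) => Hab; case: (boolP (rle q b a)) => Hba //=; rewrite ?andbT.
- apply/idP/idP.
    by case/andP => /orP [] ? /orP [] ?; sat tr; try contra_rle; closeb.
  by case/andP => /orP [] /andP [? ?] /orP [] /andP [? ?]; sat tr; contra_rle.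
- apply/idP/idP.
    by case/andP => /orP [] ? /orP [] ?; sat tr; try contra_rle; closeb.
  by case/andP => /orP [] /andP [? ?] /orP [] /andP [? ?]; sat tr; contra_rle.
- apply/idP/idP.
    by case/andP => /andP [/orP [] ? /orP [] ?] /andP [/orP [] ? /orP [] ?]; sat tr;
      try contra_rle; closeb.
  by case/andP => /orP [] /andP [? ?] /orP [] /andP [? ?]; sat tr; closeb.
Qed.

Lemma cls_merge a : cls (merge q x y) a =
  if (cls q a == cls q x) || (cls q a == cls q y) then cls q x :|: cls q y
  else cls q a.
Proof.
rewrite !cls_eq //.
have sym : forall c d, requiv q c d = requiv q d c by move=> c d; rewrite /requiv andbC.
rewrite (sym a x) (sym a y).
case: (boolP (requiv q x a || requiv q y a)) => Ha.
  apply/setP => b; rewrite in_setU !in_cls requiv_merge Ha /=.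
  case: (boolP (requiv q x b || requiv q y b)) => Hb; first by rewrite orbT.
  rewrite orbF; apply/negP => Hab; move: Hb Ha; rewrite /requiv.
  by case/andP: Hab => ? ? /norP [/negP Hb1 /negP Hb2] /orP [] /andP [? ?];
    sat tr; [apply: Hb1 | apply: Hb2]; closeb.
by apply/setP => b; rewrite !in_cls requiv_merge (negbTE Ha) /= orbF.
Qed.

Lemma nclasses_merge : nclasses q = (nclasses (merge q x y)).+1.
Proof.
set Cx := cls q x; set Cy := cls q y.
pose f (C : {set I}) := if (C == Cx) || (C == Cy) then Cx :|: Cy else C.
set S := [set cls q a | a : I].
have SE : [set cls (merge q x y) a | a : I] = f @: S.
  have Ef : forall a, cls (merge q x y) a = f (cls q a) by move=> a; rewrite cls_merge.
  by rewrite (eq_imset _ Ef) imset_comp.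
have Cxy : Cx != Cy by rewrite /Cx /Cy cls_eq // /requiv (negbTE Hxy).
have CyS : Cy \in S by apply: imset_f.
have E1 : f @: S = f @: (S :\ Cy).
  apply/setP => D; apply/imsetP/imsetP => [[C HC ->]|[C HC ->]].
    case: (eqVneq C Cy) => [EC|NC].
      exists Cx; first by rewrite in_setD1 Cxy; apply: imset_f.
      by rewrite /f EC !eqxx orbT.
    by exists C => //; rewrite in_setD1 NC.
  by exists C => //; move: HC; rewrite in_setD1 => /andP [].
have inj : {in S :\ Cy &, injective f}.
  move=> C1 C2; rewrite !in_setD1 => /andP [N1 /imsetP [c1 _ E1']] /andP [N2 /imsetP [c2 _ E2']].
  rewrite /f (negbTE N1) (negbTE N2) !orbF.
  have key : forall C c, C = cls q c -> C != Cy -> C != Cx -> C != Cx :|: Cy.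
    move=> C c EC NCy NCx; apply/negP => /eqP HC.
    have : y \in C by rewrite HC in_setU /Cy in_cls /requiv !refl orbT.
    rewrite EC in_cls -cls_eq // => /eqP HC'; by rewrite EC HC' eqxx in NCy.
  case: (eqVneq C1 Cx) => [->|NX1]; case: (eqVneq C2 Cx) => [->|NX2] //=.
  - by move=> HH; move: (key _ _ E2' N2 NX2); rewrite -HH eqxx.
  - by move=> HH; move: (key _ _ E1' N1 NX1); rewrite HH eqxx.
rewrite !nclassesE SE E1 (card_in_imset inj) -/S.
by rewrite (cardsD1 Cy S) CyS.
Qed.

End Splitting.

Lemma card_compl_addle (I : finType) (q : {set I * I}) x y :
  preposet q -> ~~ rle q x y -> (#|~: addle q x y| < #|~: q|)%N.
Proof. by move=> Hq Hxy; apply: card_compl_lt Hxy _ (@addle_sub _ q x y) (addle_ab _ _ Hq). Qed.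

Lemma card_compl_merge (I : finType) (q : {set I * I}) x y :
  preposet q -> ~~ rle q x y -> (#|~: merge q x y| < #|~: q|)%N.
Proof.
move=> Hq Hxy; apply: (card_compl_lt Hxy (q' := merge q x y)) => [c d H|].
  by apply: addle_merge; apply: addle_sub.
by apply: addle_merge; apply: addle_ab.
Qed.

Section Cones.
Variable R : realType.
Variable I : finType.
Implicit Types (q l : {set I * I}) (u v : I -> R).

Definition gen (a b : I) : I -> R := fun k => (b == k)%:R - (a == k)%:R.

Lemma gen_swap (a b k : I) : gen b a k = - gen a b k.
Proof. by rewrite /gen opprB. Qed.

Lemma cone_ext q u v : (forall k, u k = v k) -> cone R q u -> cone R q v.
Proof. by move=> E [c [c0 Hc]]; exists c; split=> // k; rewrite -E. Qed.

Lemma cone0 q : cone R q (fun=> 0).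
Proof.
exists (fun=> 0); split=> // k.
by rewrite big1 // => ij _; rewrite mul0r.
Qed.

Lemma coneD q u v : cone R q u -> cone R q v -> cone R q (fun k => u k + v k).
Proof.
move=> [c [c0 Hc]] [d [d0 Hd]]; exists (fun ij => c ij + d ij); split.
  by move=> ij; rewrite addr_ge0.
by move=> k; rewrite Hc Hd -big_split /=; apply: eq_bigr => ij _; rewrite mulrDl.
Qed.

Lemma coneZ q t u : 0 <= t -> cone R q u -> cone R q (fun k => t * u k).
Proof.
move=> t0 [c [c0 Hc]]; exists (fun ij => t * c ij); split.
  by move=> ij; rewrite mulr_ge0.
by move=> k; rewrite Hc mulr_sumr; apply: eq_bigr => ij _; rewrite mulrA.
Qed.

Lemma cone_gen q a b : rle q a b -> cone R q (gen a b).
Proof.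
move=> Hab; exists (fun ij => if ij == (b, a) then 1 else 0); split.
  by move=> ij; case: ifP.
move=> k; rewrite (bigD1 (b, a)) //= eqxx mul1r big1 ?addr0 // => ij /andP [_ /negbTE ->].
by rewrite mul0r.
Qed.

Lemma cone_ind q (S : (I -> R) -> Prop) :
  S (fun=> 0) ->
  (forall u v, S u -> S v -> S (fun k => u k + v k)) ->
  (forall t u, 0 <= t -> S u -> S (fun k => t * u k)) ->
  (forall a b, rle q a b -> S (gen a b)) ->
  (forall u v, (forall k, u k = v k) -> S u -> S v) ->
  forall v, cone R q v -> S v.
Proof.
move=> S0 SD SZ Sg Sext v [c [c0 Hc]].
apply: (Sext (fun k => \sum_(ij <- enum [set: I * I] | rle q ij.2 ij.1)
   c ij * ((ij.1 == k)%:R - (ij.2 == k)%:R))).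
  by move=> k; rewrite Hc big_enum_cond /=; apply: eq_bigl => ij; rewrite in_setT.
elim: (enum _) => [|ij s IH].
  by apply: (Sext (fun=> 0)) => // k; rewrite big_nil.
case: (boolP (rle q ij.2 ij.1)) => Hij.
  apply: (Sext (fun k => c ij * gen ij.2 ij.1 k + \sum_(ij <- s | rle q ij.2 ij.1)
   c ij * ((ij.1 == k)%:R - (ij.2 == k)%:R))).
    by move=> k; rewrite big_cons Hij.
  by apply: SD => //; apply: SZ => //; apply: Sg.
by apply: (Sext _ _ _ IH) => k; rewrite big_cons (negbTE Hij).
Qed.

Lemma cone_mono q q' : (forall a b, rle q a b -> rle q' a b) ->
  forall v, cone R q v -> cone R q' v.
Proof.
move=> H; apply: cone_ind.
- exact: cone0.
- by move=> u v; apply: coneD.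
- by move=> t u; apply: coneZ.
- by move=> a b /H; apply: cone_gen.
- by move=> u v; apply: cone_ext.
Qed.

Lemma sum_eq_in (T : {set I}) (b : I) :
  \sum_(k in T) ((b == k)%:R : R) = (b \in T)%:R.
Proof.
case: (boolP (b \in T)) => Hb.
  rewrite (bigD1 b) //= eqxx big1 ?addr0 // => k /andP [_ Hk].
  by rewrite eq_sym (negbTE Hk).
by rewrite big1 // => k Hk; case: eqP => // Ek; rewrite Ek Hk in Hb.
Qed.

Lemma sum_gen (T : {set I}) (w z : I) :
  \sum_(k in T) gen w z k = (z \in T)%:R - (w \in T)%:R.
Proof. by rewrite sumrB !sum_eq_in. Qed.

Lemma cone_upset q (T : {set I}) v :
  (forall a b, rle q a b -> a \in T -> b \in T) ->
  cone R q v -> 0 <= \sum_(k in T) v k.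
Proof.
move=> HT; apply: (cone_ind (S := fun v => 0 <= \sum_(k in T) v k)).
- by rewrite big1.
- by move=> u w Hu Hw; rewrite big_split addr_ge0.
- by move=> t u t0 Hu; rewrite -mulr_sumr mulr_ge0.
- by move=> a b Hab; rewrite sum_gen subr_ge0; case: (a \in T) (HT _ _ Hab) => // ->.
- by move=> u w E; under eq_bigr do rewrite E.
Qed.

Lemma cone_addle q a b v : preposet q ->
  cone R (addle q a b) v <->
  exists c t, [/\ cone R q c, 0 <= t & forall k, v k = c k + t * gen a b k].
Proof.
case/preposetP=> H1 H2; split.
  apply: (cone_ind (S := fun v => exists c t,
       [/\ cone R q c, 0 <= t & forall k, v k = c k + t * gen a b k])).
  - exists (fun=> 0), 0; split=> //; first exact: cone0.
    by move=> k; rewrite mul0r addr0.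
  - move=> u w [c [t [Hc t0 Eu]]] [c' [t' [Hc' t0' Ew]]].
    exists (fun k => c k + c' k), (t + t'); split.
    + exact: coneD.
    + by rewrite addr_ge0.
    + by move=> k; rewrite Eu Ew mulrDl; ring.
  - move=> s u s0 [c [t [Hc t0 Eu]]]; exists (fun k => s * c k), (s * t); split.
    + exact: coneZ.
    + by rewrite mulr_ge0.
    + by move=> k; rewrite Eu mulrDr mulrA.
  - move=> x y; rewrite rle_addle; case/orP=> [Hxy|/andP [Hxa Hby]].
      exists (gen x y), 0; split=> //; first exact: cone_gen.
      by move=> k; rewrite mul0r addr0.
    exists (fun k => gen x a k + gen b y k), 1; split=> //.
      by apply: coneD; apply: cone_gen.
    by move=> k; rewrite /gen mul1r; ring.
  - move=> u w E [c [t [Hc t0 Eu]]]; exists c, t; split=> // k.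
    by rewrite -E.
case=> c [t [Hc t0 Ev]].
apply: (cone_ext (u := fun k => c k + t * gen a b k)) => //.
apply: coneD; first by apply: cone_mono Hc => x y; apply: addle_sub.
apply: coneZ => //; apply: cone_gen; rewrite rle_addle !H1 orbT //.
Qed.

Lemma ind1 q v : cone R q v -> ind_cone R q v = 1.
Proof. by move=> H; rewrite /ind_cone asboolT. Qed.

Lemma ind0 q v : ~ cone R q v -> ind_cone R q v = 0.
Proof. by move=> H; rewrite /ind_cone asboolF. Qed.

End Cones.

Section ConeSplitting.
Variable R : realType.
Variable I : finType.
Variable q : {set I * I}.
Hypothesis Hq : preposet q.
Variables x y : I.

Lemma cone_merge v :
  cone R (merge q x y) v <-> cone R (addle q x y) v \/ cone R (addle q y x) v.
Proof.
split.
  move/(cone_addle _ _ _ (preposet_addle _ _ Hq)) => [c [t [Hc t0 Ev]]].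
  move/(cone_addle _ _ _ Hq): Hc => [c' [s [Hc' s0 Ec]]].
  case: (lerP t s) => Hts.
    left; apply/(cone_addle _ _ _ Hq); exists c', (s - t); split=> //.
      by rewrite subr_ge0.
    by move=> k; rewrite Ev Ec gen_swap; ring.
  right; apply/(cone_addle _ _ _ Hq); exists c', (t - s); split=> //.
    by rewrite subr_ge0 ltW.
  by move=> k; rewrite Ev Ec gen_swap; ring.
case=> H.
  by apply: cone_mono H; apply: addle_merge.
by apply: cone_mono H; apply: addle_merge_sym.
Qed.

(* cone(q) = cone(q + (x<=y)) n cone(q + (y<=x)), the nontrivial inclusion:
   a convex combination of the two decompositions cancels the generators. *)
Lemma cone_addle_both v :
  cone R (addle q x y) v -> cone R (addle q y x) v -> cone R q v.
Proof.
move/(cone_addle _ _ _ Hq) => [c1 [s [H1 s0 E1]]].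
move/(cone_addle _ _ _ Hq) => [c2 [t [H2 t0 E2]]].
have [st0|st0] := eqVneq (s + t) 0.
  have s00 : s = 0 by apply/eqP; rewrite eq_le s0 -st0 lerDl t0.
  by apply: cone_ext H1 => k; rewrite E1 s00 mul0r addr0.
have Hst : 0 < s + t by rewrite lt_def st0 addr_ge0.
apply: (cone_ext (u := fun k => t / (s + t) * c1 k + s / (s + t) * c2 k)).
  move=> k; have := E1 k; have := E2 k; rewrite gen_swap => e2 e1.
  have -> : v k = (t * v k + s * v k) / (s + t) by field.
  by rewrite {1}e1 e2; field.
by apply: coneD; apply: coneZ => //; rewrite divr_ge0 // ltW.
Qed.

Lemma ind_cone_split v : ind_cone R q v =
  ind_cone R (addle q x y) v + ind_cone R (addle q y x) v - ind_cone R (merge q x y) v.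
Proof.
have [Hv|Hv] := pselect (cone R q v).
  rewrite !ind1 //.
  - by rewrite addrK.
  - by apply: cone_mono Hv => a b /(addle_sub x y) /addle_merge.
  - by apply: cone_mono Hv => a b /(addle_sub y x).
  - by apply: cone_mono Hv => a b /(addle_sub x y).
rewrite (ind0 Hv).
have [Hp|Hp] := pselect (cone R (addle q x y) v);
  have [Hm|Hm] := pselect (cone R (addle q y x) v).
- by case: Hv; apply: cone_addle_both.
- rewrite (ind1 Hp) (ind0 Hm) ind1 ?addr0 ?subrr //.
  by apply/cone_merge; left.
- rewrite (ind0 Hp) (ind1 Hm) ind1 ?add0r ?subrr //.
  by apply/cone_merge; right.
- rewrite (ind0 Hp) (ind0 Hm) ind0 ?addr0 ?subrr //.
  by move/cone_merge => [].
Qed.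

End ConeSplitting.

Section Expansion.
Variable R : realType.
Variable I : finType.
Implicit Types (q l : {set I * I}) (v : I -> R).

Definition sgn q : R := (-1) ^+ nclasses q.

Lemma sgn_sq q : sgn q * sgn q = 1.
Proof. by rewrite /sgn -exprMn mulrNN mulr1 expr1n. Qed.

Definition expansion q := forall v, ind_cone R q v =
  \sum_(l | prelinear_ext q l) sgn q * sgn l * ind_cone R l v.

(* The induction step: split along an incomparable pair and regroup the
   extensions by the relative position of the pair. *)
Lemma expansion_split q x y : preposet q -> ~~ rle q x y -> ~~ rle q y x ->
  expansion (addle q x y) -> expansion (addle q y x) -> expansion (merge q x y) ->
  expansion q.
Proof.
move=> Hq Hxy Hyx IHp IHm IHe v.
rewrite (ind_cone_split Hq x y v) IHp IHm IHe.
have -> : sgn (addle q x y) = sgn q by rewrite /sgn nclasses_addle.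
have -> : sgn (addle q y x) = sgn q by rewrite /sgn nclasses_addle.
have -> : sgn (merge q x y) = - sgn q.
  by rewrite /sgn (nclasses_merge Hq Hxy Hyx) exprS mulN1r opprK.
rewrite (eq_bigl _ _ (ext_addle Hq Hyx)) (eq_bigl _ _ (ext_addle Hq Hxy)).
rewrite (eq_bigl _ _ (ext_merge Hq Hxy Hyx)).
rewrite [RHS](bigID (fun l => rlt l x y)) [X in _ = _ + X](bigID (fun l => rlt l y x)) /=.
have E2 : (fun l => prelinear_ext q l && ~~ rlt l x y && rlt l y x) =1
   (fun l => prelinear_ext q l && rlt l y x).
  by move=> l /=; rewrite /rlt; case: (prelinear_ext q l); case: (rle l x y); case: (rle l y x).
have E3 : (fun l => prelinear_ext q l && ~~ rlt l x y && ~~ rlt l y x) =1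
   (fun l => prelinear_ext q l && requiv l x y).
  move=> l; case: (boolP (prelinear_ext q l)) => //= /extP [Ht' _ _].
  have [_ _ tot] := totalP Ht'.
  rewrite /rlt /requiv !negb_and !negbK.
  by case: (rle l x y) (rle l y x) (tot x y) => [] [].
rewrite (eq_bigl _ _ E2) (eq_bigl _ _ E3) addrA; congr (_ + _ + _).
by rewrite -sumrN; apply: eq_bigr => l _; ring.
Qed.

Theorem expansion_preposet q : preposet q -> expansion q.
Proof.
move: q; apply: (@measure_ind _ (fun q => #|~: q|)) => q IH Hq.
case: (boolP (total_preorder q)) => Ht.
  move=> v; rewrite (eq_bigl (fun l => l == q)); last by move=> l; rewrite ext_total.
  by rewrite big_pred1_eq sgn_sq mul1r.
have : ~~ [forall x, forall y, rle q x y || rle q y x].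
  by apply: contra Ht => H; apply/andP.
rewrite negb_forall => /existsP [x]; rewrite negb_forall => /existsP [y].
rewrite negb_or => /andP [Hxy Hyx].
apply: (expansion_split Hq Hxy Hyx); apply: IH.
- exact: card_compl_addle.
- exact: preposet_addle.
- exact: card_compl_addle.
- exact: preposet_addle.
- exact: card_compl_merge.
- exact/preposet_addle/preposet_addle.
Qed.

End Expansion.

Section TotalOver.
Variable I : finType.
Implicit Types (E l m : {set I * I}).

Definition equiv_rel E :=
  preposet E && [forall a, forall b, rle E a b ==> rle E b a].

Definition total_over E l := total_preorder l && (E \subset l).

Lemma equiv_relP E : equiv_rel E ->
  [/\ forall x, rle E x x, (forall x y z, rle E x y -> rle E y z -> rle E x z)
    & forall x y, rle E x y -> rle E y x].
Proof.
case/andP=> /preposetP [H1 H2] /forallP H3; split=> // x y.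
by move: (H3 x) => /forallP /(_ y) /implyP.
Qed.

Lemma total_overP E l : total_over E l ->
  total_preorder l /\ (forall a b, rle E a b -> rle l a b).
Proof. by case/andP=> Ht /subsetP Hs; split=> // a b; apply: Hs. Qed.

Lemma total_over_setT E : total_over E [set: I * I].
Proof.
apply/andP; split; last exact: subsetT.
have H : forall x y, rle [set: I * I] x y by move=> x y; rewrite /rle in_setT.
by apply: totalI => [|x y]; [apply: preposetI | rewrite H].
Qed.

(* For an equivalence relation E, the relation <_E is empty, so the
   prelinear extensions of E are exactly the total preorders containing E. *)
Lemma ext_equiv_rel E l : equiv_rel E -> prelinear_ext E l = total_over E l.
Proof.
move=> HE; have [rE tE sE] := equiv_relP HE.
apply/idP/idP.
  case/extP => Ht Hs _; apply/andP; split=> //.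
  by apply/subsetP => [[x y]] /Hs.
case/total_overP => Ht Hs; apply/extP; split=> // x y.
by rewrite /rlt => /andP [/sE -> ].
Qed.

Lemma equiv_rel_merge E (w z : I) : equiv_rel E -> equiv_rel (merge E w z).
Proof.
move=> HE; have [rE tE sE] := equiv_relP HE.
have HEp : preposet E by case/andP: HE.
apply/andP; split; first by apply: preposet_addle; apply: preposet_addle.
apply/forallP => x; apply/forallP => y; apply/implyP.
rewrite !rle_merge //; case/orP => [/sE ->//|/andP [H1 H2]].
apply/orP; right; apply/andP; split.
  by case/orP: H2 => /sE ->; rewrite ?orbT.
by case/orP: H1 => /sE ->; rewrite ?orbT.
Qed.

Lemma total_over_merge E m (w z : I) : preposet E ->
  total_over E m -> rle m w z -> rle m z w -> total_over (merge E w z) m.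
Proof.
move=> HEp Hm Hmwz Hmzw.
have [Htm HEm] := total_overP Hm; have [rm tm _] := totalP Htm.
apply/andP; split=> //; apply/subsetP => [[x y]] Hxy.
change (is_true (rle (merge E w z) x y)) in Hxy; change (is_true (rle m x y)).
move: Hxy; rewrite rle_merge //; case/orP => [/HEm //|].
by case/andP => /orP [] /HEm ? /orP [] /HEm ?; sat tm.
Qed.

Lemma total_over_addle E l (w z : I) : preposet E ->
  total_over E l -> rle l w z -> total_over (merge E w z) (addle l z w).
Proof.
move=> HEp /total_overP [Ht HEl] Hwz.
have [rl tl totl] := totalP Ht.
have Hlp : preposet l by case/andP: Ht.
apply: total_over_merge => //; last exact: addle_ab.
  apply/andP; split.
    apply: totalI; first exact: preposet_addle.
    by move=> x y; rewrite !rle_addle; case/orP: (totl x y) => ->; rewrite ?orbT.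
  by apply/subsetP => [[x y]] /HEl /(addle_sub z w).
exact: addle_sub.
Qed.

Lemma total_min (s : {set I * I}) (U : {set I}) p : total_preorder s -> p \in U ->
  exists2 w, w \in U & forall x, x \in U -> rle s w x.
Proof.
move=> Ht pU; have [rs ts tot] := totalP Ht.
case: (arg_minnP (fun i => #|[set y | rle s y i]|) pU) => w wU Hmin.
exists w => // x xU; apply/negPn/negP => Hn.
have Hxw : rle s x w by move: (tot w x); rewrite (negbTE Hn).
have : (#|[set y | rle s y x]| < #|[set y | rle s y w]|)%N.
  apply: proper_card; apply/properP; split.
    by apply/subsetP => y; rewrite !inE => H; apply: ts Hxw.
  by exists w; rewrite !inE ?rs.
by rewrite ltnNge Hmin.
Qed.

End TotalOver.

(* The combinatorial heart of the independence proof: if every fiber of the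
   maps l |-> l + (z<=w) has vanishing a-sum and s-sum, with s = +-1, then the
   weight a l * s l is the same for all total preorders l containing E. *)
Section Core.
Variable R : realType.
Variable I : finType.
Implicit Types (l m : {set I * I}).

Variable E : {set I * I}.
Hypothesis HE : equiv_rel E.
Let Eref : forall x, rle E x x.
Proof. by case: (equiv_relP HE). Qed.
Let Etr : forall x y z, rle E x y -> rle E y z -> rle E x z.
Proof. by case: (equiv_relP HE). Qed.
Let Esym : forall x y, rle E x y -> rle E y x.
Proof. by case: (equiv_relP HE). Qed.

Variables a s : {set I * I} -> R.
Hypothesis Hs2 : forall l, s l * s l = 1.

Definition fiber (w z : I) m :=
  fun l => total_over E l && rle l w z && (addle l z w == m).

Hypothesis Ga : forall w z, ~~ rle E w z -> forall m, total_over E m ->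
  rle m w z -> rle m z w -> \sum_(l | fiber w z m l) a l = 0.
Hypothesis Gs : forall w z, ~~ rle E w z -> forall m, total_over E m ->
  rle m w z -> rle m z w -> \sum_(l | fiber w z m l) s l = 0.

Definition weight l := a l * s l.

Lemma a_eq l : a l = weight l * s l.
Proof. by rewrite /weight -mulrA Hs2 mulr1. Qed.

(* cut l w splits the l-class of w, putting the E-class of w strictly below
   the rest of that class. *)
Definition cut (l : {set I * I}) (w : I) : {set I * I} :=
  [set xy | rle l xy.1 xy.2 &&
     ~~ (rle E xy.2 w && ~~ rle E xy.1 w && rle l xy.2 xy.1)].

Lemma rle_cut l w x y : rle (cut l w) x y =
  rle l x y && ~~ (rle E y w && ~~ rle E x w && rle l y x).
Proof. by rewrite /rle inE. Qed.

Lemma cut_meet l w rho : total_over E l -> total_over E rho ->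
  (forall x y, rle rho x y -> rle l x y) ->
  (forall x, rle l w x -> rle rho w x) ->
  total_over E (rho :&: cut l w).
Proof.
move=> /total_overP [Hl HEl] /total_overP [Hr HEr] Hsub Hmin.
have [rl tl totl] := totalP Hl; have [rr tr totr] := totalP Hr.
have rI : forall x y, rle (rho :&: cut l w) x y = rle rho x y && rle (cut l w) x y.
  by move=> x y; rewrite /rle inE.
apply/andP; split; last first.
  apply/subsetP => [[x y]] Hxy; change (rle (rho :&: cut l w) x y); rewrite rI rle_cut.
  change (is_true (rle E x y)) in Hxy.
  rewrite (HEr _ _ Hxy) (HEl _ _ Hxy) /=; apply/negP => /andP [/andP [Hyw /negP Hxw] _].
  by apply: Hxw; apply: Etr Hyw.
apply: totalI.
  apply: preposetI => [x|x y z]; rewrite !rI ?rle_cut.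
    by rewrite rr rl /= !andbT andbN.
  case/andP=> Hxy /andP [Hlxy Hnxy]; case/andP=> Hyz /andP [Hlyz Hnyz].
  rewrite (tr _ _ _ Hxy Hyz) (tl _ _ _ Hlxy Hlyz) /=.
  apply/negP => /andP [/andP [Hzw Hxw] Hlzx].
  case: (boolP (rle E y w)) => Hyw.
    by move: Hnxy; rewrite Hyw Hxw /= (tl _ _ _ Hlyz Hlzx).
  by move: Hnyz; rewrite Hzw Hyw /= (tl _ _ _ Hlzx Hlxy).
have key : forall x y, rle rho x y ->
    rle (rho :&: cut l w) x y || rle (rho :&: cut l w) y x.
  move=> x y Hxy; rewrite !rI !rle_cut Hxy (Hsub _ _ Hxy) /=.
  case: (boolP (rle E y w && ~~ rle E x w && rle l y x)) => //= /andP [/andP [Hyw Hxw] Hlyx].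
  rewrite Hlyx (negbTE Hxw) /= andbT.
  apply: (tr _ w); first by apply: HEr.
  apply: Hmin; apply: tl (Hlyx); apply: HEl; exact: Esym.
move=> x y; case/orP: (totr x y) => H; first exact: key.
by rewrite orbC key.
Qed.

Lemma cut_sub l w : cut l w \subset l.
Proof. by apply/subsetP => [[x y]]; rewrite inE => /andP []. Qed.

Lemma cut_total l w : total_over E l -> total_over E (cut l w).
Proof.
move=> Hl; have := @cut_meet l w l Hl Hl (fun x y H => H) (fun x H => H).
by rewrite (setIidPr (cut_sub l w)).
Qed.

Lemma cut_card l w z : requiv l w z -> ~~ rle E w z -> (#|cut l w| < #|l|)%N.
Proof.
case/andP=> Hwz Hzw HnE; apply: proper_card; apply/properP; split.
  exact: cut_sub.
exists (z, w) => //.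
change (~~ rle (cut l w) z w); rewrite rle_cut Hzw Eref /= Hwz andbT negbK.
by apply: contra HnE; apply: Esym.
Qed.

Lemma pick_pair l sg : total_over E l -> total_over E sg -> sg \subset l ->
  sg != l ->
  exists w z, [/\ requiv l w z, ~~ rle E w z & forall x, rle l w x -> rle sg w x].
Proof.
move=> Hl Hsg Hsub Hne.
have Hpr : sg \proper l by rewrite properEneq Hne.
have [_ [[p q0] Hpq Hnpq]] := properP Hpr.
change (is_true (rle l p q0)) in Hpq; change (is_true (~~ rle sg p q0)) in Hnpq.
have [Htl HEl] := total_overP Hl; have [rl tl totl] := totalP Htl.
have [Hts HEs] := total_overP Hsg; have [rs ts tots] := totalP Hts.
have sub : forall x y, rle sg x y -> rle l x y.
  by move=> x y Hxy; move/subsetP: Hsub => /(_ (x, y) Hxy).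
have Hlq0p : rle l q0 p by apply: sub; move: (tots p q0); rewrite (negbTE Hnpq).
have pU : p \in [set x | requiv l p x] by rewrite inE /requiv rl.
have [w wU Hw] := total_min Hts pU.
move: wU; rewrite inE /requiv => /andP [Hpw Hwp].
have [z /andP [Hlwz HnE]] : exists z, requiv l w z && ~~ rle E w z.
  case: (boolP (rle E w p)) => Hwp'.
    exists q0; rewrite /requiv (tl _ _ _ Hwp Hpq) (tl _ _ _ Hlq0p Hpw) /=.
    apply/negP => Hwq; move/negP: Hnpq; apply; apply: HEs.
    by apply: Etr Hwq; apply: Esym.
  by exists p; rewrite /requiv Hwp Hpw.
exists w, z; split=> // x Hwx; case: (boolP (rle l x w)) => Hxw.
  by apply: Hw; rewrite inE /requiv (tl _ _ _ Hpw Hwx) (tl _ _ _ Hxw Hwp).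
by case/orP: (tots w x) => // /sub Hxw'; rewrite Hxw' in Hxw.
Qed.

(* Inside the induction on #|l|: every total rho strictly below l keeping w
   minimal has the weight of cut l w, through their common lower bound. *)
Lemma cut_reduce l w :
  (forall l', (#|l'| < #|l|)%N -> total_over E l' ->
     forall sg, total_over E sg -> sg \subset l' -> weight sg = weight l') ->
  total_over E l -> (#|cut l w| < #|l|)%N ->
  forall rho, total_over E rho -> rho \subset l -> rho != l ->
  (forall x, rle l w x -> rle rho w x) -> weight rho = weight (cut l w).
Proof.
move=> IH Hl Hcut_lt rho Hr Hrs Hrn Hmin.
have subr : forall x y, rle rho x y -> rle l x y.
  by move=> x y Hxy; move/subsetP: Hrs => /(_ (x, y) Hxy).
have HM := cut_meet Hl Hr subr Hmin.
have Hrlt : (#|rho| < #|l|)%N by apply: proper_card; rewrite properEneq Hrn.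
rewrite -(IH _ Hrlt Hr _ HM (subsetIl _ _)).
by rewrite (IH _ Hcut_lt (cut_total w Hl) _ HM (subsetIr _ _)).
Qed.

Lemma fiber_const w z l c : ~~ rle E w z -> total_over E l -> requiv l w z ->
  (forall rho, fiber w z l rho -> rho != l -> weight rho = c) -> weight l = c.
Proof.
move=> HnE Hl /andP [Hwz Hzw] Hc.
have [Htl _] := total_overP Hl; have [_ tl _] := totalP Htl.
have Hself : fiber w z l l.
  rewrite /fiber Hl Hwz /=; apply/eqP/setP => [[x y]].
  change (rle (addle l z w) x y = rle l x y); rewrite rle_addle.
  apply/idP/idP => [/orP [//|/andP [Hxz Hwy]]|->//].
  by apply: (tl _ w) => //; apply: tl Hzw.
have Ea := Ga HnE Hl Hwz Hzw; have Es := Gs HnE Hl Hwz Hzw.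
rewrite (bigD1 l) //= in Ea; rewrite (bigD1 l) //= in Es.
have Sa : \sum_(rho | fiber w z l rho && (rho != l)) a rho = - (c * s l).
  rewrite (eq_bigr (fun rho => c * s rho)); last first.
    by move=> rho /andP [Hr Hrn]; rewrite a_eq Hc.
  rewrite -mulr_sumr -mulrN; congr (_ * _).
  by apply/eqP; rewrite -addr_eq0 addrC Es.
move/eqP: Ea; rewrite Sa addr_eq0 opprK => /eqP Eal.
by rewrite /weight Eal -mulrA Hs2 mulr1.
Qed.

Lemma weight_const l : total_over E l ->
  forall sg, total_over E sg -> sg \subset l -> weight sg = weight l.
Proof.
move: l; apply: (@measure_ind _ (fun l => #|l|)) => l IH Hl sg Hsg Hsub.
have [->//|Hne] := eqVneq sg l.
have [w [z [Hlwz HnE Hmin]]] := pick_pair Hl Hsg Hsub Hne.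
have reduce := cut_reduce IH Hl (cut_card Hlwz HnE).
rewrite (reduce sg) //; symmetry; apply: (fiber_const HnE Hl Hlwz).
move=> rho /andP [/andP [Hr _] /eqP Hpl] Hrn; apply: reduce => //.
  by apply/subsetP => [[x y]] Hxy; rewrite -Hpl; apply: addle_sub.
by move=> x; rewrite -Hpl rle_addle => /orP [//|/andP [_ ->]].
Qed.

End Core.

Section Contraction.
Variable R : realType.
Variable I : finType.
Implicit Types (q l E : {set I * I}) (u : I -> R).

Lemma eventually_all (J : finType) (P : J -> R -> Prop) :
  (forall j, exists N0, forall N, N0 <= N -> P j N) ->
  exists N0, forall j N, N0 <= N -> P j N.
Proof.
move=> H; have [f Hf] := choice H.
exists (\sum_j `|f j|) => j N HN; apply: Hf; apply: le_trans HN.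
apply: le_trans (ler_norm _) _.
rewrite (bigD1 j) //= lerDl; apply: sumr_ge0 => i _; exact: normr_ge0.
Qed.

Definition shift u (N : R) (w z : I) : I -> R := fun k => u k + N * gen R w z k.

(* If w <=_q z fails, the q-upset of w eventually has negative mass. *)
Lemma far_out q u (w z : I) : preposet q -> ~~ rle q w z ->
  exists N0, forall N, N0 <= N -> ~ cone R q (shift u N w z).
Proof.
move=> Hq Hwz; have [rq tq] := preposetP Hq.
set T := [set k | rle q w k].
exists (\sum_(k in T) u k + 1) => N HN Hc.
have up : forall a b, rle q a b -> a \in T -> b \in T.
  by move=> a b Hab; rewrite !inE => Hwa; apply: tq Hab.
have := cone_upset up Hc.
rewrite /shift big_split /= -mulr_sumr sum_gen !inE (negbTE Hwz) rq.
by rewrite /= sub0r mulrN1 subr_ge0; move: HN; lra.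
Qed.

Lemma ind_cone_shift l u (w z : I) : total_preorder l ->
  exists N0, forall N, N0 <= N ->
    ind_cone R l (shift u N w z) = (rle l w z)%:R * ind_cone R (addle l z w) u.
Proof.
move=> Ht; have Hp : preposet l by case/andP: Ht.
case: (boolP (rle l w z)) => Hwz; last first.
  have [N0 HN0] := far_out u Hp Hwz.
  by exists N0 => N HN; rewrite mul0r ind0 //; apply: HN0.
rewrite mul1r.
have [Hc|Hc] := pselect (cone R (addle l z w) u).
  move/(cone_addle _ _ _ Hp): (Hc) => [c [t [Hcc t0 Eu]]].
  exists t => N HN; rewrite !ind1 //.
  apply: (cone_ext (u := fun k => c k + (N - t) * gen R w z k)).
    by move=> k; rewrite /shift Eu gen_swap; ring.
  by apply: coneD => //; apply: coneZ; [rewrite subr_ge0 | apply: cone_gen].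
exists 0 => N HN; rewrite (ind0 Hc) ind0 // => Hs; apply: Hc.
apply/(cone_addle _ _ _ Hp); exists (shift u N w z), N; split=> //.
by move=> k; rewrite /shift gen_swap; ring.
Qed.

Lemma limit_combination E (c : {set I * I} -> R) (w z : I) :
  (forall u, exists N0, forall N, N0 <= N ->
     \sum_(l | total_over E l) c l * ind_cone R l (shift u N w z) = 0) ->
  forall u, \sum_(l | total_over E l && rle l w z) c l * ind_cone R (addle l z w) u = 0.
Proof.
move=> H u; have [N1 H1] := H u.
have Hev : forall l, exists N0, forall N, N0 <= N -> (total_preorder l ->
    ind_cone R l (shift u N w z) = (rle l w z)%:R * ind_cone R (addle l z w) u).
  move=> l; case: (boolP (total_preorder l)) => Ht.
    have [N0 HN] := ind_cone_shift u w z Ht.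
    by exists N0 => N HN' _; exact: HN.
  by exists 0 => N _.
have [N2 H2] := eventually_all Hev.
set N := `|N1| + `|N2|.
have HN1 : N1 <= N by have := ler_norm N1; have := normr_ge0 N2; rewrite /N; lra.
have HN2 : N2 <= N by have := ler_norm N2; have := normr_ge0 N1; rewrite /N; lra.
rewrite -[RHS](H1 N HN1) [RHS](bigID (fun l => rle l w z)) /= [X in _ = _ + X]big1 ?addr0.
  by apply: eq_bigr => l /andP [/andP [Ht _] Hwz]; rewrite (H2 l N HN2 Ht) Hwz mul1r.
move=> l /andP [/andP [Ht _] Hwz]; rewrite (H2 l N HN2 Ht) (negbTE Hwz).
by rewrite mul0r mulr0.
Qed.

Lemma regroup E (c : {set I * I} -> R) (w z : I) u : preposet E ->
  \sum_(l | total_over E l && rle l w z) c l * ind_cone R (addle l z w) u =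
  \sum_(m | total_over (merge E w z) m) (\sum_(l | fiber E w z m l) c l) * ind_cone R m u.
Proof.
move=> HEp.
rewrite (partition_big (fun l => addle l z w) (total_over (merge E w z))); last first.
  by move=> l /andP [Hl Hwz]; apply: total_over_addle.
by apply: eq_bigr => m _; rewrite mulr_suml; apply: eq_bigr => l /andP [_ /eqP ->].
Qed.

End Contraction.

Section Independence.
Variable R : realType.
Variable I : finType.
Implicit Types (l m E : {set I * I}).

Definition independent_over E := forall a : {set I * I} -> R,
  (forall v, \sum_(l | total_over E l) a l * ind_cone R l v = 0) ->
  forall l, total_over E l -> a l = 0.

Lemma fiber_sums_vanish E (c : {set I * I} -> R) (w z : I) :
  preposet E -> independent_over (merge E w z) ->
  (forall u, exists N0, forall N, N0 <= N ->
     \sum_(l | total_over E l) c l * ind_cone R l (shift u N w z) = 0) ->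
  forall m, total_over E m -> rle m w z -> rle m z w ->
  \sum_(l | fiber E w z m l) c l = 0.
Proof.
move=> HEp Hind Hc m Hm Hmwz Hmzw.
apply: (Hind (fun m => \sum_(l | fiber E w z m l) c l)); last exact: total_over_merge.
by move=> v; rewrite -regroup //; apply: limit_combination.
Qed.

Lemma independence_step E : equiv_rel E ->
  (forall w z, ~~ rle E w z -> independent_over (merge E w z)) ->
  independent_over E.
Proof.
move=> HE IH a Ha; have HEp : preposet E by case/andP: HE.
pose s l := sgn R E * sgn R l.
have Hs2 : forall l, s l * s l = 1 by move=> l; rewrite /s mulrACA !sgn_sq mulr1.
have Hexp : forall v, ind_cone R E v = \sum_(l | total_over E l) s l * ind_cone R l v.
  move=> v; rewrite (expansion_preposet HEp v); apply: eq_bigl => l.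
  exact: ext_equiv_rel.
have Ga : forall w z, ~~ rle E w z -> forall m, total_over E m -> rle m w z ->
    rle m z w -> \sum_(l | fiber E w z m l) a l = 0.
  move=> w z HnE; apply: fiber_sums_vanish (IH _ _ HnE) _ => // u.
  by exists 0 => N _; exact: Ha.
(* the s-combination is 1_cone(E), which vanishes far out *)
have Gs : forall w z, ~~ rle E w z -> forall m, total_over E m -> rle m w z ->
    rle m z w -> \sum_(l | fiber E w z m l) s l = 0.
  move=> w z HnE; apply: fiber_sums_vanish (IH _ _ HnE) _ => // u.
  have [N0 HN0] := far_out u HEp HnE.
  by exists N0 => N HN; rewrite -Hexp ind0 //; apply: HN0.
set b := weight a s [set: I * I].
have Ha' : forall l, total_over E l -> a l = b * s l.
  move=> l Hl; rewrite (a_eq a Hs2).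
  by rewrite (weight_const HE Hs2 Ga Gs (total_over_setT E) Hl (subsetT l)).
(* at v = 0 the combination is b * 1_cone(E)(0) = b *)
have Hb0 : b = 0.
  have := Ha (fun=> 0).
  rewrite (eq_bigr (fun l => b * (s l * ind_cone R l (fun=> 0)))); last first.
    by move=> l Hl; rewrite Ha' // mulrA.
  by rewrite -mulr_sumr -Hexp ind1 ?mulr1 //; exact: cone0.
by move=> l Hl; rewrite Ha' // Hb0 mul0r.
Qed.

Theorem independence E : equiv_rel E -> independent_over E.
Proof.
move: E; apply: (@measure_ind _ (fun E => #|~: E|)) => E IH HE.
have HEp : preposet E by case/andP: HE.
apply: independence_step => // w z HnE.
by apply: IH; [exact: card_compl_merge | exact: equiv_rel_merge].
Qed.

End Independence.

Section Diagonal.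
Variable I : finType.

Definition diag : {set I * I} := [set xy | xy.1 == xy.2].

Lemma rle_diag x y : rle diag x y = (x == y).
Proof. by rewrite /rle inE. Qed.

Lemma equiv_rel_diag : equiv_rel diag.
Proof.
apply/andP; split.
  apply: preposetI => [x|x y z]; rewrite !rle_diag //.
  by move=> /eqP -> /eqP ->.
by apply/forallP => x; apply/forallP => y; rewrite !rle_diag eq_sym implybb.
Qed.

Lemma total_over_diag (l : {set I * I}) : total_over diag l = total_preorder l.
Proof.
apply/idP/idP; first by case/andP.
move=> Ht; have [rl _ _] := totalP Ht; apply/andP; split=> //.
by apply/subsetP => [[x y]]; rewrite inE /= => /eqP ->; exact: rl.
Qed.

Lemma nclasses_le (l : {set I * I}) : (nclasses l <= #|I|)%N.
Proof.
by rewrite nclassesE; apply: leq_trans (leq_imset_card _ _) _; rewrite cardE.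
Qed.

(* The classes of a poset are singletons. *)
Lemma nclasses_poset (p : {set I * I}) : poset p -> nclasses p = #|I|.
Proof.
case/andP => Hp /forallP Ha; have [rp _] := preposetP Hp.
have E : forall x, cls p x = [set x].
  move=> x; apply/setP => y; rewrite in_cls in_set1 /requiv.
  apply/idP/idP => [/andP [H1 H2]|/eqP ->]; last by rewrite rp.
  by move: (Ha x) => /forallP /(_ y) /implyP /(_ H1) /implyP /(_ H2); rewrite eq_sym.
rewrite nclassesE (eq_imset _ E) card_imset; last exact: set1_inj.
by rewrite cardE.
Qed.

End Diagonal.

Lemma sgn_poset (R : realType) (I : finType) (p l : {set I * I}) : poset p ->
  sgn R p * sgn R l = (-1) ^+ (#|I| - nclasses l).
Proof.
move=> Hp; rewrite /sgn (nclasses_poset Hp) -{1}(subnK (nclasses_le l)) exprD.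
by rewrite -mulrA -expr2 -exprM mulnC exprM sqrrN expr1n expr1n mulr1.
Qed.

Theorem theorem8p2 (R : realType) (I : finType) :
  (* the indicators of total preorder cones are linearly independent *)
  (forall a : {set I * I} -> R,
     (forall v : I -> R,
        \sum_(l : {set I * I} | total_preorder l) a l * ind_cone R l v = 0) ->
     forall l, total_preorder l -> a l = 0) /\
  (* every preposet cone indicator lies in their span *)
  (forall q : {set I * I}, preposet q ->
     exists a : {set I * I} -> R, forall v : I -> R,
       ind_cone R q v =
       \sum_(l : {set I * I} | total_preorder l) a l * ind_cone R l v) /\
  (* expansion of poset cones *)
  (forall p : {set I * I}, poset p ->
     forall v : I -> R,
       ind_cone R p v =
       \sum_(l : {set I * I} | prelinear_ext p l)
          (-1) ^+ (#|I| - nclasses l) * ind_cone R l v).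
Proof.
split.
  move=> a Ha l Hl.
  apply: (independence (@equiv_rel_diag I)) => [v|]; last by rewrite total_over_diag.
  by rewrite -[RHS](Ha v); apply: eq_bigl => l'; rewrite total_over_diag.
split.
  move=> q Hq; exists (fun l => if prelinear_ext q l then sgn R q * sgn R l else 0).
  move=> v; rewrite (expansion_preposet Hq v) big_mkcond [RHS]big_mkcond.
  apply: eq_bigr => l _; case: (boolP (prelinear_ext q l)) => H.
    by case/extP: H => -> _ _.
  by case: (total_preorder l); rewrite ?mul0r.
move=> p Hp v; have Hpp : preposet p by case/andP: Hp.
by rewrite (expansion_preposet Hpp v); apply: eq_bigr => l _; rewrite sgn_poset.
Qed.
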